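(* Fix $m\in\mathbb N$ and $r\ge2$, and let $(A_{m,r},B_{m,r})$, together with the level-$(r-1)$ pairs $(A^{(j)},B^{(j)})$ and index $i$ used in its construction, be drawn from $I_{m,r}$ as described in the context, where the parameter $\epsilon$ at each level of the construction is chosen sufficiently small as a function of $m$ and the level. Then, almost surely, the following are equivalent: (1) $\mathrm{conv}(A_{m,r})\cap\mathrm{conv}(B_{m,r})=\emptyset$; (2) $A^{(i)}\cap B^{(i)}=\emptyset$; (3) $A_{m,r}\cap B_{m,r}=\emptyset$.
   Context: The random pair $I_{m,r}=(A_{m,r},B_{m,r})$ of finite subsets of $\mathbb R^2$ is defined recursively. For $r=1$: $A_{m,1}=\{(0,0)\}$ and $B_{m,1}$ is uniformly either $\{(0,0)\}$ or $\emptyset$. For $r>1$: let $p_1,\dots,p_m$ be $m$ evenly spaced points on the part of the unit circle in the open positive quadrant $\{(x,y):x>0,y>0\}$; let $\epsilon>0$ be a parameter; let $U_j$ be the rotation matrix mapping the $y$-axis direction $e_2$ to $p_j$ and $e_1$ to a unit vector $p_j^\perp$ orthogonal to $p_j$; let $T_j(v)=U_j\begin{pmatrix}-\epsilon&0\\0&-\epsilon^2\end{pmatrix}v+p_j$. Draw $(A^{(1)},B^{(1)}),\dots,(A^{(m)},B^{(m)})$ i.i.d. from $I_{m,r-1}$ and $i$ uniform in $[m]$ independently, and set $A_{m,r}=\bigcup_{j=1}^mT_j(B^{(j)})$ and $B_{m,r}=T_i(A^{(i)})$. $\mathrm{conv}$ denotes convex hull. *)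

From HB Require Import structures.
From mathcomp Require Import all_boot all_order all_algebra.
From mathcomp Require Import boolp classical_sets reals trigo.
Set Implicit Arguments. Unset Strict Implicit. Unset Printing Implicit Defensive.
Import Order.TTheory GRing.Theory Num.Theory.
Local Open Scope ring_scope.
Local Open Scope classical_set_scope.

Section Defs.
Variable R : realType.

Definition arc_pt (m : nat) (j : 'I_m) : R * R :=
  let th := pi * (j.+1)%:R / (2 * (m.+1)%:R) in (cos th, sin th).

(* T_j(v) = U_j diag(-e, -e^2) v + p_j, where U_j is the rotation with
   U_j e2 = p_j and U_j e1 = p_j^perp = (p_y, -p_x). *)
Definition Tmap (m : nat) (e : R) (j : 'I_m) (v : R * R) : R * R :=
  let p := arc_pt j in
  let a := - e * v.1 in
  let b := - e ^+ 2 * v.2 in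
  (a * p.2 + b * p.1 + p.1, - a * p.1 + b * p.2 + p.2).

Definition level_A (m : nat) (e : R) (F : 'I_m -> set (R * R) * set (R * R))
  : set (R * R) :=
  [set x | exists j : 'I_m, exists y, (F j).2 y /\ x = Tmap e j y].

Definition level_B (m : nat) (e : R) (F : 'I_m -> set (R * R) * set (R * R))
  (i : 'I_m) : set (R * R) :=
  [set x | exists y, (F i).1 y /\ x = Tmap e i y].

(* realizable m eps r A B : (A,B) is in the support of I_{m,r}, where eps k
   is the parameter epsilon used at level k of the construction.
   (The distribution is finite and every realization has positive
   probability, so "almost surely" = "for every realization".) *)
Fixpoint realizable (m : nat) (eps : nat -> R) (r : nat)
  (A B : set (R * R)) {struct r} : Prop :=
  match r with
  | 0 => False
  | 1 => A = [set (0, 0)] /\ (B = [set (0, 0)] \/ B = set0)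
  | k.+1 =>
      exists (F : 'I_m -> set (R * R) * set (R * R)) (i : 'I_m),
        (forall j, realizable m eps k (F j).1 (F j).2) /\
        A = level_A (eps k.+1) F /\ B = level_B (eps k.+1) F i
  end.

Definition conv (S : set (R * R)) : set (R * R) :=
  [set x | exists (n : nat) (w : 'I_n -> R) (p : 'I_n -> R * R),
     (forall k, 0 <= w k) /\ \sum_(k < n) w k = 1 /\ (forall k, S (p k)) /\
     x = (\sum_(k < n) w k * (p k).1, \sum_(k < n) w k * (p k).2)].

End Defs.

From HB Require Import structures.
From mathcomp Require Import all_boot all_order all_algebra.
From mathcomp Require Import boolp classical_sets reals trigo.
From mathcomp Require Import ring lra.
Set Implicit Arguments. Unset Strict Implicit. Unset Printing Implicit Defensive.
Import Order.TTheory GRing.Theory Num.Theory.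
Local Open Scope ring_scope.
Local Open Scope classical_set_scope.

(* By induction on the level, every realizable pair lies in the box
   [-2,2]^2 and, when disjoint, is strictly separated by a line
   x_2 + u x_1 = c with |u|, |c| <= 4/d, where d > 0 bounds the p_j away
   from the x-axis and from each other.  At the next level, the linear form
   with normal p_i + eps u p_i^perp takes the value 1 - eps^2 (x_2 + u x_1)
   at T_i(x), so it separates T_i(A^(i)) from T_i(B^(i)) by the level
   1 - eps^2 c, while on T_j(B^(j)), j <> i, it is at most
   <p_i, p_j> + O(eps) <= 1 - d + O(eps); eps <= d^3/100 makes all the
   error terms fit and keeps the renormalized line within the bound 4/d.  A separating line also separates
   the convex hulls, which gives (2) -> (1); (1) -> (3) -> (2) is immediate. *)

Section Dot.
Variable R : realDomainType.
Implicit Types (x y w p : R * R) (a b t : R).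

Definition dotp x y : R := x.1 * y.1 + x.2 * y.2.

Definition perp p : R * R := (p.2, - p.1).

Definition tilt t p : R * R := (p.1 + t * p.2, p.2 - t * p.1).

Lemma normrM_le a b t t' : `|t| <= a -> `|t'| <= b -> `|t * t'| <= a * b.
Proof. by move=> ha hb; rewrite normrM ler_pM. Qed.

Lemma mulr_le_norm a b t t' : `|t| <= a -> `|t'| <= b -> t * t' <= a * b.
Proof. by move=> ha hb; rewrite (le_trans (ler_norm _)) // normrM_le. Qed.

Lemma norm_dotp_le a b x y :
  `|x.1| <= a -> `|x.2| <= a -> `|y.1| <= b -> `|y.2| <= b ->
  `|dotp x y| <= 2 * a * b.
Proof.
move=> hx1 hx2 hy1 hy2; rewrite (le_trans (ler_normD _ _)) //.
by rewrite -mulrA mulr2n mulrDl mul1r lerD // normrM_le.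
Qed.

Lemma dotp_tilt t p x : dotp (tilt t p) x = dotp p x + t * dotp (perp p) x.
Proof. by rewrite /dotp /=; ring. Qed.

End Dot.

Section Separation.
Variable R : realType.
Implicit Types (S A B : set (R * R)) (x w : R * R) (c : R).

Definition sep_by w c A B : Prop :=
  (forall a, A a -> dotp w a < c) /\ (forall b, B b -> c < dotp w b).

Lemma sub_conv S : S `<=` conv S.
Proof.
move=> x Sx; exists 1%N, (fun=> 1), (fun=> x); split => //.
rewrite big_ord1; split => //; split => //.
by rewrite !big_ord1 !mul1r; case: x {Sx}.
Qed.

Lemma conv_dotp_lt S w c x :
  (forall p, S p -> dotp w p < c) -> conv S x -> dotp w x < c.
Proof.
move=> hS [n [a [p [a_ge0 [a_sum1 [Sp ->]]]]]].
have [k ak_gt0] : exists k, 0 < a k.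
  have : \sum_k a k != 0 by rewrite a_sum1 oner_neq0.
  by rewrite psumr_neq0 // => /hasP [k _ /andP [_ ?]]; exists k.
have -> : dotp w (\sum_(k < n) a k * (p k).1, \sum_(k < n) a k * (p k).2) =
    \sum_(k < n) a k * dotp w (p k).
  rewrite /dotp /= !mulr_sumr -big_split; apply: eq_bigr => j _.
  by rewrite mulrDr !mulrA [w.1 * _]mulrC [w.2 * _]mulrC.
rewrite -subr_gt0 -[c]mul1r -a_sum1 mulr_suml -sumrB (bigD1 k) //=.
rewrite -mulrBr ltr_pwDl ?mulr_gt0 ?subr_gt0 ?hS //.
by apply: sumr_ge0 => j _; rewrite -mulrBr mulr_ge0 // subr_ge0 ltW ?hS.
Qed.

Lemma sep_by_conv_disjoint w c A B : sep_by w c A B -> conv A `&` conv B = set0.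
Proof.
move=> [hA hB]; apply/seteqP; split => // x [/(conv_dotp_lt hA) xA].
have dotpN y : dotp (- w.1, - w.2) y = - dotp w y by rewrite /dotp /=; ring.
have hB' b : B b -> dotp (- w.1, - w.2) b < - c by move=> /hB; rewrite dotpN ltrN2.
by move=> /(conv_dotp_lt hB'); rewrite dotpN ltrN2 ltNge ltW.
Qed.

Lemma sep_by_normalize w c A B :
  0 < w.2 -> sep_by w c A B -> sep_by (w.1 / w.2, 1) (c / w.2) A B.
Proof.
move=> w2_gt0 [hA hB].
have dotpE x : dotp (w.1 / w.2, 1) x = dotp w x / w.2.
  by rewrite /dotp /=; field; rewrite gt_eqF.
by split=> x; [move/hA | move/hB]; rewrite dotpE ltr_pM2r ?invr_gt0.
Qed.

End Separation.

Section Arc.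
Variable R : realType.
Variable m : nat.
Implicit Types i j : 'I_m.

Local Notation p := (arc_pt R).

Lemma arc_angle_bounds j :
  (0 : R) < (pi : R) * (j.+1)%:R / (2 * (m.+1)%:R) < (pi : R) / 2.
Proof.
have pi_gt0 := @pi_gt0 R.
have m_gt0 : 0 < (m.+1)%:R :> R by rewrite ltr0n.
apply/andP; split; first by rewrite divr_gt0 ?mulr_gt0 ?ltr0n.
rewrite ltr_pdivrMr ?mulr_gt0 // mulrA divfK ?pnatr_eq0 //.
by rewrite ltr_pM2l // ltr_nat ltnS ltn_ord.
Qed.

Lemma arc_pt_norm j : (p j).1 ^+ 2 + (p j).2 ^+ 2 = 1.
Proof. exact: cos2Dsin2. Qed.

Lemma arc_pt_le1 j : `|(p j).1| <= 1 /\ `|(p j).2| <= 1.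
Proof. by split; [exact: cos_max | exact: sin_max]. Qed.

Lemma arc_pt2_gt0 j : 0 < (p j).2.
Proof.
have /andP[th_gt0 th_lt] := arc_angle_bounds j.
apply: sin_gt0_pi; rewrite th_gt0 (lt_trans th_lt) //.
by rewrite ltr_pdivrMr // ltr_pMr ?pi_gt0 // ltr1n.
Qed.

Lemma arc_pt_dotp_lt1 i j : i != j -> dotp (p i) (p j) < 1.
Proof.
move=> neq_ij; rewrite /dotp /= -cosB.
have /andP[a_gt0 a_lt] := arc_angle_bounds i.
have /andP[b_gt0 b_lt] := arc_angle_bounds j.
set a := (pi : R) * _ / _ in a_gt0 a_lt *; set b := (pi : R) * _ / _ in b_gt0 b_lt *.
rewrite -cos_norm -cos0.
have pi_gt0 := @pi_gt0 R.
have ab_le : `|a - b| <= pi.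
  rewrite (le_trans (ler_normB _ _)) // !gtr0_norm //.
  by rewrite [X in _ <= X](splitr pi) lerD // ltW.
rewrite ltr_cos ?in_itv /= ?lexx ?normr_ge0 ?ab_le ?(ltW pi_gt0) //.
rewrite normr_gt0 subr_eq0; apply: contra neq_ij; rewrite /a /b => /eqP.
have den_neq0 : (2 * (m.+1)%:R : R)^-1 != 0 by rewrite invr_eq0 mulf_neq0 ?pnatr_eq0.
move=> /(mulIf den_neq0) /(mulfI (lt0r_neq0 pi_gt0)) /eqP.
by rewrite eqr_nat eqSS.
Qed.

Lemma arc_gap : exists2 d : R, 0 < d <= 1 &
  (forall j, d <= (p j).2) /\ (forall i j, i != j -> dotp (p i) (p j) <= 1 - d).
Proof.
pose f (ij : 'I_m * 'I_m) :=
  if ij.1 == ij.2 then (p ij.1).2 else 1 - dotp (p ij.1) (p ij.2).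
pose d := \big[Num.min/1]_ij f ij.
have f_gt0 ij : 0 < f ij.
  by rewrite /f; case: eqP => [_|/eqP ?]; rewrite ?arc_pt2_gt0 ?subr_gt0 ?arc_pt_dotp_lt1.
exists d; first by rewrite bigmin_le_id lt_bigmin ?ltr01.
split=> [j | i j neq_ij]; first by have := bigmin_le 1 (j, j) f; rewrite /f /= eqxx.
by have := bigmin_le 1 (i, j) f; rewrite /f /= (negbTE neq_ij) lerBrDl addrC -lerBrDl.
Qed.

End Arc.

Section Tmap.
Variables (R : realType) (m : nat).
Implicit Types (e t : R) (v y : R * R) (i j : 'I_m).

Local Notation p := (arc_pt R).

Definition box2 : set (R * R) := [set x | `|x.1| <= 2 /\ `|x.2| <= 2].

Lemma normN_eps_le e : 0 < e <= 1 / 4 -> `|- e| <= e /\ `|- e ^+ 2| <= e.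
Proof.
move=> /andP[e_gt0 e_le]; rewrite !normrN !gtr0_norm ?exprn_gt0 //.
by split=> //; rewrite expr2 ger_pMl //; lra.
Qed.

Lemma Tmap_box2 e j v : 0 < e <= 1 / 4 -> box2 v -> box2 (Tmap e j v).
Proof.
move=> e_bnd [v1_le v2_le]; rewrite /box2 /Tmap.
have := arc_pt_le1 R j; case: (p j) => q1 q2 /= [q1_le q2_le].
have [eN_le e2N_le] := normN_eps_le e_bnd.
have a_le : `|- e * v.1| <= e * 2 by exact: normrM_le.
have b_le : `|- e ^+ 2 * v.2| <= e * 2 by exact: normrM_le.
have /ler_normlP[? ?] := normrM_le a_le q1_le.
have /ler_normlP[? ?] := normrM_le a_le q2_le.
have /ler_normlP[? ?] := normrM_le b_le q1_le.
have /ler_normlP[? ?] := normrM_le b_le q2_le.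
move/ler_normlP: q1_le => [? ?]; move/ler_normlP: q2_le => [? ?].
by case/andP: e_bnd => *; split; apply/ler_normlP; split; lra.
Qed.

Lemma dotp_tilt_Tmap e u i v :
  dotp (tilt (e * u) (p i)) (Tmap e i v) = 1 - e ^+ 2 * dotp (u, 1) v.
Proof.
have := arc_pt_norm R i; rewrite /dotp /tilt /Tmap.
case: (p i) => p1 p2 /= norm_p.
transitivity ((p1 ^+ 2 + p2 ^+ 2) * (1 - e ^+ 2 * (u * v.1 + 1 * v.2))); first by ring.
by rewrite norm_p mul1r.
Qed.

Lemma dotp_Tmap e i j y : dotp (p i) (Tmap e j y) =
  dotp (p i) (p j) + (- e * y.1) * dotp (p i) (perp (p j))
  + (- e ^+ 2 * y.2) * dotp (p i) (p j).
Proof. by rewrite /dotp /Tmap /perp /=; ring. Qed.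

Lemma dotp_tilt_Tmap_le g e t i j y :
  dotp (p i) (p j) <= 1 - g -> 0 < e <= 1 / 4 -> box2 y ->
  dotp (tilt t (p i)) (Tmap e j y) <= 1 - g + 8 * e + 4 * `|t|.
Proof.
move=> pij_le e_bnd y_box; have [y1_le y2_le] := y_box.
have [Ty1_le Ty2_le] := Tmap_box2 j e_bnd y_box.
have [eN_le e2N_le] := normN_eps_le e_bnd.
have [pi1_le pi2_le] := arc_pt_le1 R i; have [pj1_le pj2_le] := arc_pt_le1 R j.
have D1_le : `|dotp (p i) (perp (p j))| <= 2 * 1 * 1.
  by apply: norm_dotp_le; rewrite //= normrN.
have D2_le : `|dotp (p i) (p j)| <= 2 * 1 * 1 by exact: norm_dotp_le.
have D3_le : `|dotp (perp (p i)) (Tmap e j y)| <= 2 * 1 * 2.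
  by apply: norm_dotp_le; rewrite //= normrN.
have := mulr_le_norm (normrM_le eN_le y1_le) D1_le.
have := mulr_le_norm (normrM_le e2N_le y2_le) D2_le.
have := mulr_le_norm (lexx `|t|) D3_le.
by rewrite dotp_tilt dotp_Tmap; case/andP: e_bnd => *; lra.
Qed.

Lemma level_setI_eq0 e (F : 'I_m -> set (R * R) * set (R * R)) i :
  level_A e F `&` level_B e F i = set0 -> (F i).1 `&` (F i).2 = set0.
Proof.
move=> AB0; apply/seteqP; split=> // y [y1 y2].
have : (level_A e F `&` level_B e F i) (Tmap e i y) by split; [exists i, y | exists y].
by rewrite AB0.
Qed.

End Tmap.

Arguments box2 {R}.

Section Induction.
Variables (R : realType) (m : nat) (d : R).
Hypotheses (d_gt0 : 0 < d) (d_le1 : d <= 1)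
  (arc_pt2_ge : forall j : 'I_m, d <= (arc_pt R j).2)
  (arc_dotp_le : forall i j : 'I_m, i != j -> dotp (arc_pt R i) (arc_pt R j) <= 1 - d).
Implicit Types (e u c : R) (A B : set (R * R)).
Implicit Types (F : 'I_m -> set (R * R) * set (R * R)) (i : 'I_m).

Definition line_separated A B : Prop :=
  exists u c, `|u| <= 4 / d /\ `|c| <= 4 / d /\ sep_by (u, 1) c A B.

Lemma eps_bounds e u c : 0 < e <= d ^+ 3 / 100 -> `|u| <= 4 / d -> `|c| <= 4 / d ->
  [/\ e <= d / 100, `|e * u| <= d / 25 & `|e ^+ 2 * c| <= d / 25].
Proof.
move=> /andP[e_gt0 e_le] u_le c_le.
have d2_le : d ^+ 2 <= d by rewrite expr2 ger_pMl.
have d3_le : d ^+ 3 <= d ^+ 2 by rewrite exprSr ger_pMr ?exprn_gt0.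
have e2_le : e ^+ 2 <= e by rewrite expr2 ger_pMl //; nra.
have eK_le : e * (4 / d) <= d / 25.
  by rewrite mulrA ler_pdivrMr // mulrAC -expr2; lra.
split; first lra.
  by rewrite normrM gtr0_norm // (le_trans _ eK_le) // ler_wpM2l // ltW.
rewrite normrM gtr0_norm ?exprn_gt0 // (le_trans _ eK_le) //.
exact: ler_pM (exprn_ge0 _ (ltW e_gt0)) (normr_ge0 _) e2_le c_le.
Qed.

Lemma level_sep_by e u c F i :
  0 < e <= d ^+ 3 / 100 -> `|u| <= 4 / d -> `|c| <= 4 / d ->
  (forall j, (F j).2 `<=` box2) -> sep_by (u, 1) c (F i).1 (F i).2 ->
  sep_by (tilt (e * u) (arc_pt R i)) (1 - e ^+ 2 * c) (level_A e F) (level_B e F i).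
Proof.
move=> e_bnd u_le c_le F2_box [sepA sepB].
have [e_le eu_le /ler_normlP[? ?]] := eps_bounds e_bnd u_le c_le.
have e_gt0 : 0 < e by case/andP: e_bnd.
have e2_gt0 : 0 < e ^+ 2 by rewrite exprn_gt0.
split=> [_ [j [y [Fy ->]]] | _ [y [Fy ->]]]; last first.
  by rewrite dotp_tilt_Tmap ltrD2l ltrN2 ltr_pM2l // sepA.
have [eq_ji|neq_ji] := eqVneq j i.
  by subst j; rewrite dotp_tilt_Tmap ltrD2l ltrN2 ltr_pM2l // sepB.
have e_bnd' : 0 < e <= 1 / 4 by rewrite e_gt0 /=; move: d_le1; lra.
have neq_ij : i != j by rewrite eq_sym.
have := dotp_tilt_Tmap_le (e * u) (arc_dotp_le neq_ij) e_bnd' (F2_box j y Fy).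
by move: d_gt0; lra.
Qed.

Lemma line_separated_level e F i :
  0 < e <= d ^+ 3 / 100 -> (forall j, (F j).2 `<=` box2) ->
  line_separated (F i).1 (F i).2 -> line_separated (level_A e F) (level_B e F i).
Proof.
move=> e_bnd F2_box [u [c [u_le [c_le sep_uc]]]].
have [_ eu_le e2c_le] := eps_bounds e_bnd u_le c_le.
have := level_sep_by e_bnd u_le c_le F2_box sep_uc.
set w := tilt _ _; set c' := 1 - _.
have [p1_le p2_le] := arc_pt_le1 R i.
have w2_ge : d / 2 <= w.2.
  have := mulr_le_norm eu_le p1_le; have := arc_pt2_ge i.
  by rewrite /w /=; move: d_gt0; lra.
have w2_gt0 : 0 < w.2 by apply: lt_le_trans w2_ge; rewrite divr_gt0.
have w1_le : `|w.1| <= 2.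
  rewrite (le_trans (ler_normD _ _)) //; have := normrM_le eu_le p2_le.
  by move: p1_le d_le1; lra.
have c'_le : `|c'| <= 2.
  by rewrite (le_trans (ler_normB _ _)) // normr1; move: e2c_le d_le1; lra.
have div_le z : `|z| <= 2 -> `|z / w.2| <= 4 / d.
  move=> z_le; rewrite normrM normfV (gtr0_norm w2_gt0) ler_pdivrMr //.
  apply: le_trans z_le _; have -> : 2 = 4 / d * (d / 2) :> R by field; rewrite gt_eqF.
  by rewrite ler_wpM2l // divr_ge0 // ltW.
move=> /(sep_by_normalize w2_gt0) sep_w.
by exists (w.1 / w.2), (c' / w.2); split; [|split]; rewrite ?div_le.
Qed.

Lemma realizable_box2_separated (eps : nat -> R) :
  (forall k, 0 < eps k <= d ^+ 3 / 100) -> forall k A B, realizable m eps k A B ->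
  [/\ A `<=` box2, B `<=` box2 & A `&` B = set0 -> line_separated A B].
Proof.
move=> eps_bnd; elim=> [|[|k] IH] A B //=.
  have K_ge1 : 1 <= 4 / d by rewrite ler_pdivlMr //; move: d_le1; lra.
  have box0 : [set ((0, 0) : R * R)] `<=` box2 by move=> _ /= ->; rewrite /box2 /= normr0.
  move=> [-> [->|->]]; split=> //; first by move/seteqP=> [/(_ (0, 0)) AB0 _]; case: AB0.
  move=> _; exists 0, 1; rewrite normr0 normr1 K_ge1 ltW ?divr_gt0 //; do 2!split=> //.
  by split=> [_ /= -> | //]; rewrite /dotp /= !mulr0 add0r ltr01.
move=> [F [i [F_real [-> ->]]]].
have F_box j : (F j).1 `<=` box2 /\ (F j).2 `<=` box2.
  by have [? ? _] := IH _ _ (F_real j).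
have /andP[e_gt0 e_le] := eps_bnd k.+2.
have e_bnd : 0 < eps k.+2 <= 1 / 4.
  rewrite e_gt0 /=; apply: le_trans e_le _.
  by rewrite ler_pdivrMr // (le_trans (exprn_ile1 _ _ _)) ?(ltW d_gt0) //; lra.
split.
- by move=> _ [j [y [Fy ->]]]; apply: Tmap_box2 e_bnd ((F_box j).2 y Fy).
- by move=> _ [y [Fy ->]]; apply: Tmap_box2 e_bnd ((F_box i).1 y Fy).
- move=> /level_setI_eq0; have [_ _ Fi_sep] := IH _ _ (F_real i).
  by move/Fi_sep; apply: line_separated_level => // j; case: (F_box j).
Qed.

End Induction.

Theorem lemma9 (R : realType) (m : nat) (hm : (0 < m)%N) :
  exists eps0 : nat -> R, (forall k, 0 < eps0 k) /\
  forall eps : nat -> R, (forall k, 0 < eps k <= eps0 k) ->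
  forall r : nat, (2 <= r)%N ->
  forall (F : 'I_m -> set (R * R) * set (R * R)) (i : 'I_m),
    (forall j, realizable m eps r.-1 (F j).1 (F j).2) ->
    let A := level_A (eps r) F in
    let B := level_B (eps r) F i in
    (conv A `&` conv B = set0 <-> (F i).1 `&` (F i).2 = set0) /\
    ((F i).1 `&` (F i).2 = set0 <-> A `&` B = set0).
Proof.
have [d /andP[d_gt0 d_le1] [arc_pt2_ge arc_dotp_le]] := arc_gap R m.
exists (fun=> d ^+ 3 / 100); split=> [_|eps eps_bnd r _ F i F_real A B].
  by rewrite divr_gt0 ?exprn_gt0.
have F_props j := realizable_box2_separated d_gt0 d_le1 arc_pt2_ge arc_dotp_le
  eps_bnd (F_real j).
have F2_box j : (F j).2 `<=` box2 by case: (F_props j).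
have hull_disjoint : (F i).1 `&` (F i).2 = set0 -> conv A `&` conv B = set0.
  case: (F_props i) => _ _ /[apply].
  move=> /(line_separated_level d_gt0 d_le1 arc_pt2_ge arc_dotp_le (eps_bnd r) F2_box).
  by move=> [u [c [_ [_ /sep_by_conv_disjoint]]]].
have disjoint_of_hull : conv A `&` conv B = set0 -> A `&` B = set0.
  exact: subsetI_eq0 (@sub_conv _ A) (@sub_conv _ B).
have Fi_disjoint : A `&` B = set0 -> (F i).1 `&` (F i).2 = set0.
  exact: level_setI_eq0.
split; split.
- by move/disjoint_of_hull/Fi_disjoint.
- exact: hull_disjoint.
- by move/hull_disjoint/disjoint_of_hull.
- exact: Fi_disjoint.
Qed.
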